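(* Let $p>1$, $c\in(0,1]$, $X\subset\mathbb{R}^n$, $f(x)=\mathbb{E}[F(x,\xi)]$, and for $x\in X$, $y\in\mathbb{R}$, $z>0$ let \[ \phi(x,y,z)=\frac{c}{z^{p-1}}\mathbb{E}[(F(x,\xi)-y)_+^p]+y+c(p-1)p^{-\frac p{p-1}}z,\qquad h(x)=f(x)+c\,\mathbb{E}^{1/p}[(F(x,\xi)-f(x))_+^p]. \] Then for any $x\in X$ and $y\in\mathbb{R}$, $\Phi(x,y):=\inf_{z>0}\phi(x,y,z)$ is attained at $z=p^{\frac1{p-1}}\mathbb{E}^{1/p}[(F(x,\xi)-y)_+^p]$. Moreover, for any $x\in X$, $\inf_{y\ge f(x),z>0}\phi(x,y,z)=\inf_{y\ge f(x)}\Phi(x,y)=h(x)$, attained at $y=f(x)$ and $z=p^{\frac1{p-1}}\mathbb{E}^{1/p}[(F(x,\xi)-f(x))_+^p]$.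
   Context: $(a)_+=\max\{a,0\}$; $F(x,\xi)$ has finite $p$-th moment for each $x$. *)

From HB Require Import structures.
From mathcomp Require Import all_boot all_order all_algebra.
From mathcomp Require Import all_classical all_reals all_analysis.
Set Implicit Arguments. Unset Strict Implicit. Unset Printing Implicit Defensive.
Import Order.TTheory GRing.Theory Num.Theory.
Local Open Scope classical_set_scope.
Local Open Scope ring_scope.

Definition expect d (T : measurableType d) (R : realType)
  (P : probability T R) (g : T -> R) : R :=
  fine (\int[P]_w (g w)%:E)%E.

Definition pospart (R : realType) (a : R) : R := Num.max a 0.

From HB Require Import structures.
From mathcomp Require Import all_boot all_order all_algebra.
From mathcomp Require Import all_classical all_reals all_analysis.
From mathcomp Require Import ring lra measurable_realfun.
Import Order.TTheory GRing.Theory Num.Theory.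
Local Open Scope classical_set_scope.
Local Open Scope ring_scope.

(* Fix x and y and let a = E[(F(x,xi) - y)_+^p].  The substitution
   z = p^(1/(p-1)) a^(1/p) t turns phi(x,y,z) into
   y + c a^(1/p) (t^(1-p) + (p-1) t) / p, and t^(1-p) + (p-1) t >= p with
   equality at t = 1 (Young's inequality).  Hence Phi(x,y) = y + c a^(1/p),
   attained at t = 1 when a > 0 and approached as z -> 0 when a = 0.
   By Minkowski's inequality, y |-> ||(F(x,xi) - y)_+||_p decreases by at most
   the increase of y, so for c <= 1 the map y |-> y + c ||(F(x,xi) - y)_+||_p is
   nondecreasing: its infimum over y >= f(x) is its value h(x) at f(x). *)

Section infimum.
Variable R : realType.

Lemma inf_lbound_adherent (E : set R) m : E !=set0 -> lbound E m ->
  (forall e, 0 < e -> exists2 x, E x & x < m + e) -> inf E = m.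
Proof.
move=> E0 Em adh; apply/eqP; rewrite eq_le lb_le_inf // andbT leNgt.
apply/negP => mE.
have [x Ex] : exists2 x, E x & x < m + (inf E - m) by apply: adh; rewrite subr_gt0.
have : inf E <= x by apply: ge_inf => //; exists m.
lra.
Qed.

Lemma inf_setX {T1 T2 : Type} (A : set T1) (B : set T2) (g : T1 -> T2 -> R) m :
  A !=set0 -> B !=set0 -> (forall a b, A a -> B b -> m <= g a b) ->
  inf [set g ab.1 ab.2 | ab in A `*` B] =
  inf [set inf [set g a b | b in B] | a in A].
Proof.
move=> [a0 Aa0] [b0 Bb0] gm.
have lb_g a : A a -> has_lbound [set g a b | b in B].
  by move=> Aa; exists m => _ [b Bb <-]; exact: gm.
have lb_inf : has_lbound [set inf [set g a b | b in B] | a in A].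
  exists m => _ [a Aa <-]; apply: lb_le_inf; first by exists (g a b0), b0.
  by move=> _ [b Bb <-]; exact: gm.
apply: inf_lbound_adherent.
- by exists (g a0 b0), (a0, b0).
- move=> _ [[a b] [/= Aa Bb] <-].
  apply: le_trans (ge_inf lb_inf _) (ge_inf (lb_g a Aa) _); first by exists a.
  by exists b.
- move=> e e0; set I := inf _.
  have e20 : 0 < e / 2 by rewrite divr_gt0.
  have [_ [a Aa <-] ga] : exists2 r, [set inf [set g a b | b in B] | a in A] r
      & r < I + e / 2.
    by apply: inf_lt; [exists (inf [set g a0 b | b in B]), a0 | rewrite ltrDl].
  have [_ [b Bb <-] gab] : exists2 r, [set g a b | b in B] r
      & r < inf [set g a b | b in B] + e / 2.
    by apply: inf_lt; [exists (g a b0), b0 | rewrite ltrDl].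
  exists (g a b); first by exists (a, b).
  lra.
Qed.

End infimum.

Section scalar_problem.
Variables (R : realType) (p c a y : R).
Hypotheses (p1 : 1 < p) (c0 : 0 < c) (a0 : 0 <= a).

Let K := c * (p - 1) * p `^ (- (p / (p - 1))).
Let phi z := c / z `^ (p - 1) * a + y + K * z.
Let u := p `^ (p - 1)^-1.

Let p0 : 0 < p. Proof. exact: lt_trans ltr01 p1. Qed.
Let pN0 : p != 0. Proof. by rewrite gt_eqF. Qed.
Let p1N0 : p - 1 != 0. Proof. by rewrite gt_eqF // subr_gt0. Qed.
Let K_gt0 : 0 < K. Proof. by rewrite !mulr_gt0 ?powR_gt0 // subr_gt0. Qed.
Let u_gt0 : 0 < u. Proof. exact: powR_gt0. Qed.

Lemma young_powR1B t : 0 < t -> p <= t `^ (1 - p) + (p - 1) * t.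
Proof.
(* Young's inequality for t^(-(p-1)/p) * t^((p-1)/p) = 1 with exponents p, p/(p-1). *)
move=> t0; have q0 : 0 < p / (p - 1) by rewrite divr_gt0 // subr_gt0.
have conj : p^-1 + (p / (p - 1))^-1 = 1 by field; rewrite p1N0 pN0.
have := conjugate_powR (powR_ge0 t (- ((p - 1) / p))) (powR_ge0 t ((p - 1) / p))
  p0 q0 conj.
rewrite -powRD; last by apply/implyP => _; rewrite gt_eqF.
rewrite addNr powRr0 -!powRrM.
rewrite (_ : - ((p - 1) / p) * p = 1 - p); last by field; rewrite pN0.
rewrite (_ : (p - 1) / p * (p / (p - 1)) = 1); last by field; rewrite p1N0 pN0.
rewrite (powRr1 (ltW t0)) (_ : t `^ (1 - p) / p + t / (p / (p - 1)) =
    (t `^ (1 - p) + (p - 1) * t) / p); last by field; rewrite p1N0 pN0.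
by rewrite ler_pdivlMr // mul1r.
Qed.

Lemma phi_rescale t : 0 < a -> 0 < t ->
  phi (u * a `^ p^-1 * t) = y + c * a `^ p^-1 * (t `^ (1 - p) + (p - 1) * t) / p.
Proof.
move=> a_gt0 t0; set s := a `^ p^-1.
have s0 : 0 < s by rewrite powR_gt0.
have a_s : a = s * s `^ (p - 1).
  by rewrite mulr_powRB1 ?ltW // ?subr_gt0 // -powRrM mulVf // powRr1 // ltW.
have u_p : u `^ (p - 1) = p by rewrite -powRrM mulVf // powRr1 // ltW.
have p_u : p `^ (- (p / (p - 1))) = p^-1 / u.
  rewrite -powRN -(powR_inv1 (ltW p0)) -powRD ?pN0 ?implybT //.
  by congr (_ `^ _); field; rewrite p1N0.
rewrite /phi /K !powRM ?mulr_ge0 ?ltW // u_p p_u a_s -[1 - p]opprB powRN.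
by field; rewrite ?pN0 ?gt_eqF ?powR_gt0.
Qed.

Lemma phi_ge z : 0 < z -> y + c * a `^ p^-1 <= phi z.
Proof.
move=> z0; have [a_eq0|aN0] := eqVneq a 0.
  rewrite /phi a_eq0 powR0 ?invr_neq0 // !mulr0; have := mulr_gt0 K_gt0 z0; lra.
have a_gt0 : 0 < a by rewrite lt0r aN0.
have us0 : 0 < u * a `^ p^-1 by rewrite mulr_gt0 ?powR_gt0.
rewrite (_ : z = u * a `^ p^-1 * (z / (u * a `^ p^-1))); last first.
  by rewrite mulrC divfK // gt_eqF.
rewrite phi_rescale ?divr_gt0 // lerD2l -mulrA ler_pMr ?mulr_gt0 ?powR_gt0 //.
by rewrite ler_pdivlMr // mul1r young_powR1B // divr_gt0.
Qed.

Lemma phi_opt : 0 < a -> phi (u * a `^ p^-1) = y + c * a `^ p^-1.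
Proof.
move=> a_gt0; rewrite -[u * _]mulr1 phi_rescale // powR1 mulr1.
by rewrite [1 + _]addrC subrK mulfK.
Qed.

Lemma inf_phi : inf [set phi z | z in [set z | 0 < z]] = y + c * a `^ p^-1.
Proof.
apply: inf_lbound_adherent.
- by exists (phi 1), 1 => //=; exact: ltr01.
- by move=> _ [z z0 <-]; exact: phi_ge.
move=> e e0; have [a_eq0|aN0] := eqVneq a 0.
  exists (phi (e / (2 * K))).
    by exists (e / (2 * K)) => //=; rewrite divr_gt0 // mulr_gt0.
  rewrite /phi a_eq0 powR0 ?invr_neq0 // !mulr0.
  have -> : K * (e / (2 * K)) = e / 2 by field; rewrite gt_eqF.
  lra.
have a_gt0 : 0 < a by rewrite lt0r aN0.
exists (phi (u * a `^ p^-1)).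
  by exists (u * a `^ p^-1) => //=; rewrite mulr_gt0 ?powR_gt0.
by rewrite phi_opt // ltrDl.
Qed.

End scalar_problem.

Section Lnorm_measure.
Context {d} {T : measurableType d} {R : realType}.
Variables (mu : {measure set T -> \bar R}) (p : R).
Local Notation N f := (Lnorm mu p%:E (EFin \o f)).

Lemma le_Lnorm (f g : T -> R) : 0 <= p ->
  measurable_fun setT f -> measurable_fun setT g ->
  (forall x, `|f x| <= `|g x|) -> (N f <= N g)%E.
Proof.
move=> p0 mf mg fg; rewrite unlock /=; apply: gt0_ler_poweR.
- by rewrite invr_ge0.
- by rewrite in_itv /= leey andbT integral_ge0 // => x _; rewrite lee_fin powR_ge0.
- by rewrite in_itv /= leey andbT integral_ge0 // => x _; rewrite lee_fin powR_ge0.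
have mpow (h : T -> R) : measurable_fun setT h ->
    measurable_fun [set: T] (fun x => (`|h x| `^ p)%:E : \bar R).
  move=> mh; apply/measurable_EFinP.
  by apply: (measurableT_comp (measurable_powR _)) => //; exact: measurableT_comp.
apply: ge0_le_integral => //; [exact: mpow..|].
by move=> x _; rewrite lee_fin ge0_ler_powR ?nnegrE.
Qed.

Lemma Lnorm_lty (f : T -> R) :
  mu.-integrable setT (fun x => (`|f x| `^ p)%:E) -> (N f < +oo)%E.
Proof.
move=> /integrableP[_]; rewrite unlock /= => fin; apply: poweR_lty.
by under eq_integral do rewrite -[X in X%:E](ger0_norm (powR_ge0 _ _)) -abse_EFin.
Qed.

End Lnorm_measure.

Section Lnorm_probability.
Context {d} {T : measurableType d} {R : realType} (P : probability T R) {p : R}.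
Hypothesis p1 : 1 <= p.
Local Notation N f := (Lnorm P p%:E (EFin \o f)).

Let p0 : 0 < p. Proof. exact: lt_le_trans ltr01 p1. Qed.

Lemma Lnorm_cst (r : R) : N (cst r) = `|r|%:E.
Proof.
rewrite unlock /= (_ : (fun x => _) = cst (`|r| `^ p)%:E) //.
rewrite integral_cst // [X in (_ * X)%E]probability_setT mule1 poweR_EFin -powRrM.
by rewrite mulfV ?gt_eqF // powRr1.
Qed.

Lemma Lnorm_le_add_cst (f g : T -> R) (r : R) :
  measurable_fun setT f -> measurable_fun setT g -> 0 <= r ->
  (forall x, `|f x| <= `|g x| + r) -> (N f <= N g + r%:E)%E.
Proof.
move=> mf mg r0 fgr.
have mng : measurable_fun setT (fun x => `|g x|) by exact: measurableT_comp.
apply: (le_trans (le_Lnorm P p f ((fun x => `|g x|) \+ cst r) (ltW p0) mf _ _)).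
- exact: measurable_funD.
- by move=> x; rewrite [leRHS]ger0_norm // addr_ge0.
apply: le_trans (minkowski_EFin P mng (measurable_cst r) p1) _.
rewrite Lnorm_cst ger0_norm // leeD2r // unlock /=.
by under eq_integral do rewrite /= normr_id.
Qed.

Lemma fine_Lnorm (f : T -> R) :
  fine (N f) = expect P (fun x => `|f x| `^ p) `^ p^-1.
Proof. by rewrite unlock /= fine_poweR. Qed.

Section pospart.
Context {G : T -> R}.
Hypotheses (mG : measurable_fun setT G)
  (iG : P.-integrable setT (fun w => (`|G w| `^ p)%:E)).

Let excess y w := pospart (G w - y).

Let measurable_excess y : measurable_fun setT (excess y).
Proof. by apply: measurable_maxr => //; exact: measurable_funB. Qed.

Let excess_ge0 y w : 0 <= excess y w.
Proof. by rewrite /excess /pospart le_max lexx orbT. Qed.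

Lemma Lnorm_pospart_lty y : (N (excess y) < +oo)%E.
Proof.
apply: le_lt_trans (Lnorm_le_add_cst _ _ _ (measurable_excess y) mG (normr_ge0 y) _) _.
  move=> w; rewrite ger0_norm // /excess /pospart ge_max addr_ge0 // andbT.
  have := ler_norm (G w); have := ler_norm (- y); rewrite normrN; lra.
by rewrite lte_add_pinfty ?ltry // Lnorm_lty.
Qed.

Lemma Lnorm_pospart_shift y y' : y <= y' ->
  (N (excess y) <= N (excess y') + (y' - y)%:E)%E.
Proof.
move=> yy'; apply: Lnorm_le_add_cst; rewrite ?subr_ge0 //.
move=> w; rewrite !ger0_norm // /excess /pospart ge_max.
have : G w - y' <= Num.max (G w - y') 0 by rewrite le_max lexx.
have : 0 <= Num.max (G w - y') 0 by rewrite le_max lexx orbT.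
by move=> ? ?; apply/andP; split; lra.
Qed.

Lemma le_add_pospart_Lnorm c y y' : 0 <= c <= 1 -> y <= y' ->
  y + c * expect P (fun w => pospart (G w - y) `^ p) `^ p^-1 <=
  y' + c * expect P (fun w => pospart (G w - y') `^ p) `^ p^-1.
Proof.
move=> /andP[c0 c1] yy'.
have fineE z : expect P (fun w => pospart (G w - z) `^ p) `^ p^-1 =
    fine (N (excess z)).
  rewrite fine_Lnorm; congr (expect _ _ `^ _); apply/funext => w.
  by rewrite ger0_norm.
have finE z : N (excess z) = (fine (N (excess z)))%:E.
  by rewrite fineK // ge0_fin_numE ?Lnorm_pospart_lty ?Lnorm_ge0.
have := Lnorm_pospart_shift _ _ yy'.
rewrite (finE y) (finE y') -EFinD lee_fin (fineE y) (fineE y') => shift.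
have := ler_wpM2l c0 shift; rewrite mulrDr.
have : c * (y' - y) <= y' - y by rewrite ler_piMl // subr_ge0.
lra.
Qed.

End pospart.
End Lnorm_probability.

Theorem lemma13 (n : nat) (d : measure_display) (T : measurableType d)
  (R : realType) (P : probability T R) (F : 'rV[R]_n -> T -> R)
  (X : set 'rV[R]_n) (p c : R) :
  1 < p -> 0 < c <= 1 ->
  (forall x, measurable_fun setT (F x)) ->
  (forall x, P.-integrable setT (fun w => (`|F x w| `^ p)%:E)) ->
  let f := fun x => expect P (F x) in
  let A := fun x y => expect P (fun w => pospart (F x w - y) `^ p) in
  let phi := fun x y z =>
    c / z `^ (p - 1) * A x y + y + c * (p - 1) * p `^ (- (p / (p - 1))) * z in
  let Phi := fun x y => inf [set phi x y z | z in [set z : R | 0 < z]] in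
  let h := fun x => f x + c * (A x (f x)) `^ (p^-1) in
  let zopt := fun x y => p `^ ((p - 1)^-1) * (A x y) `^ (p^-1) in
  forall x, x \in X ->
    (forall y, 0 < zopt x y -> Phi x y = phi x y (zopt x y)) /\
    inf [set phi x yz.1 yz.2 | yz in [set yz : R * R | f x <= yz.1 /\ 0 < yz.2]]
      = inf [set Phi x y | y in [set y : R | f x <= y]] /\
    inf [set Phi x y | y in [set y : R | f x <= y]] = h x /\
    Phi x (f x) = h x /\
    (0 < zopt x (f x) -> phi x (f x) (zopt x (f x)) = h x).
Proof.
move=> p1 /andP[c0 c1] mF iF f A phi Phi h zopt x _.
have p0 : 0 < p := lt_trans ltr01 p1.
have A_ge0 y : 0 <= A x y.
  by apply: fine_ge0; apply: integral_ge0 => w _; rewrite lee_fin powR_ge0.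
have PhiE y : Phi x y = y + c * A x y `^ p^-1 by exact: inf_phi.
have h_le y : f x <= y -> h x <= y + c * A x y `^ p^-1.
  by apply: (le_add_pospart_Lnorm P (ltW p1) (mF x) (iF x) c (f x) y); rewrite ltW.
have phi_zopt y : 0 < zopt x y -> phi x y (zopt x y) = y + c * A x y `^ p^-1.
  have ip0 : 0 < p^-1 by rewrite invr_gt0.
  have u0 : 0 < p `^ (p - 1)^-1 by exact: powR_gt0.
  rewrite pmulr_rgt0 // => /(gt0_powR ip0 (A_ge0 y)) A_gt0.
  exact: phi_opt.
have inf_Phi : inf [set Phi x y | y in [set y | f x <= y]] = h x.
  apply: inf_lbound_adherent => [|_ [y fy <-]|e e0].
  - by exists (Phi x (f x)), (f x) => /=.
  - by rewrite PhiE; exact: h_le.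
  - by exists (Phi x (f x)); [exists (f x) => /= | rewrite PhiE ltrDl].
split=> [y zy|]; first by rewrite (phi_zopt y zy); exact: PhiE.
split.
  apply: (@inf_setX _ _ _ [set y | f x <= y] [set z | 0 < z] (phi x) (h x)).
  - by exists (f x); exact: lexx.
  - by exists 1; exact: ltr01.
  - by move=> y z fy z0; apply: le_trans (h_le y fy) _; exact: phi_ge.
split; first exact: inf_Phi.
split; first by rewrite PhiE.
exact: phi_zopt.
Qed.
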